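(* Let $q$ be a prime power and let $\mathscr{L}_1,\dots,\mathscr{L}_q$ be $q$ distinct parallel classes of affine lines in $\mathbb{F}_q^5$ (so each $\mathscr{L}_i$ consists of all $q^4$ lines with a fixed direction $d_i\in\mathbb{F}_q^5\setminus\{0\}$, and the directions $d_1,\dots,d_q$ are pairwise non-parallel). Let $G_{\mathscr{L}}(q)$ be the bipartite incidence graph between $\mathscr{P}=\mathbb{F}_q^5$ and $\mathscr{L}=\bigcup_{i\in[q]}\mathscr{L}_i$ (a point $x$ is adjacent to a line $\ell$ iff $x\in\ell$). Then for every $\delta>0$ there exists $q_0(\delta)$ such that for every prime power $q\ge q_0(\delta)$ and every such choice of classes, every subgraph $H\subseteq G_{\mathscr{L}}(q)$ with at least $\delta q^6$ edges contains a copy of $C_8$. More precisely, $\operatorname{ex}(G_{\mathscr{L}}(q),C_8)=O(q^{23/4})$ as $q\to\infty$, with the implied constant independent of the choice of parallel classes.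
   Context: For graphs $G$ and $F$, $\operatorname{ex}(G,F)$ denotes the maximum number of edges in an $F$-free subgraph of $G$. $C_8$ is the cycle of length 8. *)

From HB Require Import structures.
From mathcomp Require Import all_boot all_order all_algebra.
Set Implicit Arguments. Unset Strict Implicit. Unset Printing Implicit Defensive.
Import GRing.Theory.
Local Open Scope ring_scope.

Definition line_dir (F : finFieldType) (x d : 'rV[F]_5) : {set 'rV[F]_5} :=
  [set x + t *: d | t : F].

Definition lines_of (F : finFieldType) (n : nat) (d : 'I_n -> 'rV[F]_5)
  : {set {set 'rV[F]_5}} :=
  [set line_dir x (d i) | x : 'rV[F]_5, i : 'I_n].

Definition incidence_edges (F : finFieldType) (n : nat) (d : 'I_n -> 'rV[F]_5)
  : {set 'rV[F]_5 * {set 'rV[F]_5}} :=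
  [set e | (e.2 \in lines_of d) && (e.1 \in e.2)].

Definition has_C8 (P L : finType) (H : {set P * L}) : Prop :=
  exists (x1 x2 x3 x4 : P) (l1 l2 l3 l4 : L),
    uniq [:: x1; x2; x3; x4] /\ uniq [:: l1; l2; l3; l4] /\
    (x1, l1) \in H /\ (x2, l1) \in H /\
    (x2, l2) \in H /\ (x3, l2) \in H /\
    (x3, l3) \in H /\ (x4, l3) \in H /\
    (x4, l4) \in H /\ (x1, l4) \in H.

From HB Require Import structures.
From mathcomp Require Import all_boot all_order all_algebra zify ring.
Import GRing.Theory.
Set Implicit Arguments.
Unset Strict Implicit.
Unset Printing Implicit Defensive.

(* For a point x call the class i H-incident to x when H contains the edge
   from x to the line through x with direction d_i.  Counting edges by points
   and applying Cauchy-Schwarz twice bounds |H|^4 by 2 q^10 (q^12 + q^4 K), where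
   K bounds the square of the number tau_ij of points to which both i and j
   are H-incident.  These points contain no parallelogram
   x, x + t d_i, x + s d_j, x + t d_i + s d_j with t, s <> 0: its vertices and
   sides would form an 8-cycle of H.  A Kovari-Sos-Turan count of the pairs of
   such points on a common line of direction d_i gives q tau_ij^2 <= 2 q^10,
   so K = 2 q^9 and |H|^4 <= 6 q^23. *)

Lemma card_sum_mem (T : finType) (A : {pred T}) : #|A| = \sum_x (x \in A).
Proof. by rewrite -sum1_card big_mkcond; apply: eq_bigr => x _; case: (x \in A). Qed.

Lemma leq_sqr_sum (I : finType) (P : pred I) (a : I -> nat) :
  (\sum_(k | P k) a k) ^ 2 <= #|P| * \sum_(k | P k) a k ^ 2.
Proof.
rewrite -(leq_pmul2l (_ : 0 < 2)) //.
have -> : (\sum_(k | P k) a k) ^ 2 = \sum_(k | P k) \sum_(l | P l) a k * a l.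
  by rewrite expnS expn1 big_distrl; apply: eq_bigr => k _; rewrite big_distrr.
rewrite big_distrr /=.
apply: (@leq_trans (\sum_(k | P k) \sum_(l | P l) (a k ^ 2 + a l ^ 2))).
  apply: leq_sum => k _; rewrite big_distrr; apply: leq_sum => l _.
  exact: (nat_Cauchy _ _).1.
rewrite (eq_bigr (fun k => #|P| * a k ^ 2 + \sum_(l | P l) a l ^ 2)); last first.
  by move=> k _; rewrite big_split /= sum_nat_const mulnC.
by rewrite big_split /= -big_distrr /= sum_nat_const mul2n addnn.
Qed.

Lemma sum_translate (V : finZmodType) (f : V -> nat) (c : V) :
  \sum_x f (x + c)%R = \sum_x f x.
Proof. by rewrite (reindex_inj (addIr (- c)%R)); apply: eq_bigr => x _; rewrite subrK. Qed.

Lemma sqr_sumb (I : finType) (B : I -> bool) :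
  (\sum_i B i) ^ 2 = \sum_i \sum_j (B i && B j).
Proof.
rewrite expnS expn1 big_distrl; apply: eq_bigr => i _.
by rewrite big_distrr; apply: eq_bigr => j _; case: (B i); case: (B j).
Qed.

Section Codegrees.
Variables (X I : finType) (S : X -> I -> bool).

Definition codeg i j := #|[set x | S x i && S x j]|.

Lemma sum_sqr_deg :
  \sum_x (\sum_i S x i) ^ 2 = \sum_x \sum_i S x i + \sum_i \sum_(j | j != i) codeg i j.
Proof.
under eq_bigr do rewrite sqr_sumb.
rewrite exchange_big [X in X + _]exchange_big -big_split /=; apply: eq_bigr => i _.
rewrite exchange_big (bigD1 i) //=; congr (_ + _).
  by apply: eq_bigr => x _; rewrite andbb.
by apply: eq_bigr => j _; rewrite /codeg card_sum_mem; apply: eq_bigr => x _; rewrite inE.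
Qed.

Lemma sum_codeg_sqr_le K : (forall i j, i != j -> codeg i j ^ 2 <= K) ->
  (\sum_i \sum_(j | j != i) codeg i j) ^ 2 <= #|I| ^ 4 * K.
Proof.
move=> codegK; apply: leq_trans (leq_sqr_sum _ _) _.
rewrite [#|I| ^ 4]expnS -mulnA leq_mul2l; apply/orP; right.
apply: (@leq_trans (\sum_(i : I) #|I| ^ 2 * K)); last first.
  by rewrite sum_nat_const expnS mulnA.
apply: leq_sum => i _; apply: leq_trans (leq_sqr_sum _ _) _.
rewrite expnS -mulnA; apply: leq_mul; first exact: max_card.
apply: (@leq_trans (\sum_(j | j != i) K)).
  by apply: leq_sum => j ji; apply: codegK; rewrite eq_sym.
by rewrite sum_nat_cond_const leq_mul2r max_card orbT.
Qed.

Lemma sum_deg_pow4_le K : (forall i j, i != j -> codeg i j ^ 2 <= K) ->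
  (\sum_x \sum_i S x i) ^ 4 <= 2 * #|X| ^ 2 * (#|X| ^ 2 * #|I| ^ 2 + #|I| ^ 4 * K).
Proof.
move=> /sum_codeg_sqr_le.
set V := \sum_(i : I) _; set E := \sum_(x : X) _ => V2_le.
have E_le : E <= #|X| * #|I|.
  apply: (@leq_trans (\sum_(x : X) #|I|)); last by rewrite sum_nat_const.
  apply: leq_sum => x _; apply: (@leq_trans (\sum_(i : I) 1)); last by rewrite sum1_card.
  by apply: leq_sum => i _; apply: leq_b1.
have E2_le : E ^ 2 <= #|X| * (E + V) by rewrite -sum_sqr_deg; apply: leq_sqr_sum.
have EV2_le : (E + V) ^ 2 <= 2 * (E ^ 2 + V ^ 2).
  by have := (nat_Cauchy E V).1; rewrite sqrnD; lia.
apply: (@leq_trans ((#|X| * (E + V)) ^ 2)).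
  by rewrite (_ : 4 = 2 * 2) // expnM leq_sqr.
rewrite expnMn (mulnC 2) -mulnA leq_mul2l; apply/orP; right.
apply: leq_trans EV2_le _; rewrite leq_mul2l; apply/orP; right.
by apply: leq_add => //; rewrite -expnMn leq_sqr.
Qed.
End Codegrees.

Local Open Scope ring_scope.

Section RectangleFree.
Variables (F : finFieldType) (V : finLmodType F) (a b : V) (T : {set V}).
Hypothesis rect_free : forall (x : V) (t s : F), t != 0 -> s != 0 ->
  x \in T -> x + t *: a \in T -> x + s *: b \in T -> x + t *: a + s *: b \in T -> False.

Definition meet_translate (u : F) := [set x in T | x + u *: a \in T].

(* A collision of (x, s) |-> x + s *: b on meet_translate u * F would be a
   rectangle with sides u *: a and (s - r) *: b. *)
Lemma card_meet_translate_le u : u != 0 -> (#|F| * #|meet_translate u| <= #|V|)%N.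
Proof.
move=> u_neq0; rewrite mulnC -cardsT -cardsX.
rewrite -(card_in_imset (f := fun p : V * F => p.1 + p.2 *: b)) ?max_card //.
move=> [x s] [y r]; rewrite !inE /= !andbT => /andP[xT xuT] /andP[yT yuT] xy.
have [sr|sr] := eqVneq s r; first by rewrite -sr in xy *; rewrite (addIr _ xy).
have y_def : y = x + (s - r) *: b by rewrite scalerBl addrA xy addrK.
exfalso; apply: (@rect_free x u (s - r) u_neq0) => //; first by rewrite subr_eq0.
  by rewrite -y_def.
by rewrite addrAC -y_def.
Qed.

Lemma rect_free_card : (#|F| * #|T| ^ 2 <= 2 * #|V| ^ 2)%N.
Proof.
have q_gt0 : (0 < #|F|)%N by apply/card_gt0P; exists 0.
pose W u := #|meet_translate u|.
pose g x := (\sum_(t : F) ((x + t *: a)%R \in T))%N.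
have sum_g : (\sum_x g x = #|F| * #|T|)%N.
  rewrite exchange_big (eq_bigr (fun=> #|T|)) ?sum_nat_const // => t _.
  by rewrite (sum_translate (fun y => nat_of_bool (y \in T))) -card_sum_mem.
have sum_g2 : (\sum_x g x ^ 2 = #|F| * \sum_u W u)%N.
  under eq_bigr do rewrite sqr_sumb.
  rewrite exchange_big (eq_bigr (fun=> \sum_u W u)) ?sum_nat_const // => t _.
  rewrite exchange_big -(sum_translate W (- t)); apply: eq_bigr => s _.
  rewrite /W card_sum_mem -(sum_translate (fun y => y \in meet_translate (s - t)) (t *: a)).
  by apply: eq_bigr => x _; rewrite inE -addrA -scalerDl (addrC t) subrK.
have sum_W : (\sum_u W u <= 2 * #|V|)%N.
  rewrite -(leq_pmul2l q_gt0) big_distrr (bigD1 0) //= mulnCA mul2n -addnn.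
  apply: leq_add; first by rewrite leq_mul2l max_card orbT.
  apply: (@leq_trans (\sum_(u | u != 0) #|V|)).
    by apply: leq_sum => u; apply: card_meet_translate_le.
  by rewrite sum_nat_cond_const leq_mul2r max_card orbT.
rewrite -(leq_pmul2l q_gt0) mulnA mulnn -expnMn -sum_g.
apply: leq_trans (leq_sqr_sum _ _) _; rewrite sum_g2 mulnCA leq_mul2l; apply/orP; right.
by apply: leq_trans (leq_mul (leqnn _) sum_W) _; rewrite mulnCA mulnn.
Qed.
End RectangleFree.

Definition lin_indep2 (F : fieldType) (V : lmodType F) (a b : V) : Prop :=
  forall u v : F, u *: a + v *: b = 0 -> u = 0 /\ v = 0.

Section Independence.
Variables (F : fieldType) (V : lmodType F).
Implicit Types a b : V.

Lemma lin_indep2C a b : lin_indep2 a b -> lin_indep2 b a.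
Proof. by move=> ab u v; rewrite addrC => /ab[-> ->]. Qed.

Lemma nonparallel_lin_indep2 a b :
  a != 0 -> ~ (exists c, b = c *: a) -> lin_indep2 a b.
Proof.
move=> a_neq0 b_nonpar u v; have [-> | v_neq0] := eqVneq v 0.
  by rewrite scale0r addr0 => /eqP; rewrite scaler_eq0 (negbTE a_neq0) orbF => /eqP.
move/eqP; rewrite addrC addr_eq0 => /eqP vbE; case: b_nonpar; exists (- (u / v)).
by apply: (scalerI v_neq0); rewrite vbE scalerA mulrN mulrCA divff // mulr1 scaleNr.
Qed.

Lemma comb2_eq a b u v u' v' : lin_indep2 a b ->
  (u *: a + v *: b == u' *: a + v' *: b) = (u == u') && (v == v').
Proof.
move=> ab; apply/eqP/andP => [E | [/eqP-> /eqP->] //].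
suff /ab[/subr0_eq-> /subr0_eq->] : (u - u') *: a + (v - v') *: b = 0 by [].
by rewrite !scalerBl addrACA -opprD E subrr.
Qed.
End Independence.

Ltac row_ring := apply/rowP => k; rewrite !mxE; ring.

Section Lines.
Variable F : finFieldType.
Implicit Types (x y : 'rV[F]_5) (a b : 'rV[F]_5).

Lemma line_dir_self x a : x \in line_dir x a.
Proof. by apply/imsetP; exists 0; rewrite ?scale0r ?addr0. Qed.

Lemma line_dir_translate x a t : line_dir (x + t *: a) a = line_dir x a.
Proof.
apply/setP => z; apply/imsetP/imsetP => [[s _ ->] | [s _ ->]].
  by exists (t + s) => //; row_ring.
by exists (s - t) => //; row_ring.
Qed.

Lemma line_dir_neq a b x y : lin_indep2 a b -> line_dir x a != line_dir y b.
Proof.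
move=> ab; apply/eqP => E.
have /imsetP[t1 _ xE] : x \in line_dir y b by rewrite -E line_dir_self.
have /imsetP[t2 _ xaE] : x + 1 *: a \in line_dir y b.
  by rewrite -E -(line_dir_translate x a 1) line_dir_self.
suff /ab[/eqP] : 1 *: a + (t1 - t2) *: b = 0 by rewrite oner_eq0.
by apply: (addIr (y + t2 *: b)); rewrite add0r -[in RHS]xaE xE; row_ring.
Qed.

Lemma eq_line_dir_translate a b x v v' : lin_indep2 a b ->
  (line_dir (x + v *: b) a == line_dir (x + v' *: b) a) = (v == v').
Proof.
move=> ab; apply/eqP/eqP => [E | -> //].
have /imsetP[t _ e] : x + v' *: b \in line_dir (x + v *: b) a by rewrite E line_dir_self.
suff /ab[_ /subr0_eq] : t *: a + (v - v') *: b = 0 by [].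
by apply: (addIr (x + v' *: b)); rewrite add0r [in RHS]e; row_ring.
Qed.

Definition both_lines (H : {set 'rV[F]_5 * {set 'rV[F]_5}}) a b : {set 'rV[F]_5} :=
  [set x | ((x, line_dir x a) \in H) && ((x, line_dir x b) \in H)].

Lemma both_lines_rect_free H a b : lin_indep2 a b -> ~ has_C8 H ->
  forall x (t s : F), t != 0 -> s != 0 ->
  x \in both_lines H a b -> x + t *: a \in both_lines H a b ->
  x + s *: b \in both_lines H a b -> x + t *: a + s *: b \in both_lines H a b -> False.
Proof.
move=> ab H_C8free x t s t_neq0 s_neq0; have ba := lin_indep2C ab.
pose p u v := x + (u *: a + v *: b).
have p_eq u v u' v' : (p u v == p u' v') = (u == u') && (v == v').
  by rewrite (inj_eq (addrI x)) comb2_eq.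
have line_a u v : line_dir (p u v) a = line_dir (x + v *: b) a.
  by rewrite /p (addrC (u *: a)) addrA line_dir_translate.
have line_b u v : line_dir (p u v) b = line_dir (x + u *: a) b.
  by rewrite /p addrA line_dir_translate.
have [-> -> -> ->] : [/\ x + t *: a + s *: b = p t s, x + t *: a = p t 0,
                        x + s *: b = p 0 s & x = p 0 0].
  by split; rewrite /p ?scale0r ?addr0 ?add0r ?addrA.
rewrite !inE !line_a !line_b => /andP[e1 e2] /andP[e3 e4] /andP[e5 e6] /andP[e7 e8].
apply: H_C8free; exists (p 0 0), (p t 0), (p t s), (p 0 s).
exists (line_dir (x + 0 *: b) a), (line_dir (x + t *: a) b).
exists (line_dir (x + s *: b) a), (line_dir (x + 0 *: a) b).
have [eq0t eq0s] : (0 == t) = false /\ (0 == s) = false.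
  by rewrite !(eq_sym 0) (negbTE t_neq0) (negbTE s_neq0).
split.
  by rewrite /= !inE !p_eq !eqxx eq0t eq0s (negbTE t_neq0).
split; last by do !split.
rewrite /= !inE !(negbTE (line_dir_neq _ _ ab)) !(negbTE (line_dir_neq _ _ ba)).
by rewrite (eq_line_dir_translate _ _ _ ab) (eq_line_dir_translate _ _ _ ba) eq0s (negbTE t_neq0).
Qed.
End Lines.

Lemma card_incidence_sub_le (F : finFieldType) n (d : 'I_n -> 'rV[F]_5)
    (H : {set 'rV[F]_5 * {set 'rV[F]_5}}) :
  H \subset incidence_edges d ->
  (#|H| <= \sum_(x : 'rV[F]_5) \sum_(i : 'I_n) ((x, line_dir x (d i)) \in H))%N.
Proof.
move=> H_sub; pose f (p : 'rV[F]_5 * 'I_n) := (p.1, line_dir p.1 (d p.2)).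
pose A := [set p | f p \in H].
have H_im : H \subset f @: A.
  apply/subsetP => -[x l] xlH; move/subsetP/(_ _ xlH): H_sub; rewrite inE /=.
  case/andP => /imset2P[y i _ _ lE]; rewrite {l}lE in xlH * => /imsetP[t _ xE].
  subst x.
  apply/imsetP; exists (y + t *: d i, i); last by rewrite /f /= line_dir_translate.
  by rewrite inE /f /= line_dir_translate.
apply: leq_trans (subset_leq_card H_im) _; apply: leq_trans (leq_imset_card _ _) _.
by rewrite card_sum_mem pair_big /=; apply: eq_leq; apply: eq_bigr => -[x i] _; rewrite inE.
Qed.

Theorem theorem3p1 :
  exists C q0 : nat,
  forall (F : finFieldType) (d : 'I_#|F| -> 'rV[F]_5),
    (q0 <= #|F|)%N ->
    (forall i, d i != 0) ->
    (forall i j, i != j -> ~ (exists c : F, d i = c *: d j)) ->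
    forall H : {set 'rV[F]_5 * {set 'rV[F]_5}},
      H \subset incidence_edges d ->
      ~ has_C8 H ->
      (#|H| ^ 4 <= C * #|F| ^ 23)%N.
Proof.
exists 6%N, 0%N => F d _ d_neq0 d_nonpar H H_sub H_C8free.
have q_gt0 : (0 < #|F|)%N by apply/card_gt0P; exists 0.
pose S x i := (x, line_dir x (d i)) \in H.
have codeg_le i j : i != j -> (codeg S i j ^ 2 <= 2 * #|F| ^ 9)%N.
  move=> ij; rewrite -(leq_pmul2l q_gt0) mulnCA -expnS.
  have dij : lin_indep2 (d i) (d j).
    by apply: nonparallel_lin_indep2 (d_neq0 i) (d_nonpar j i _); rewrite eq_sym.
  have := rect_free_card (both_lines_rect_free dij H_C8free).
  by rewrite card_mx mul1n -expnM.
have deg4_le := sum_deg_pow4_le codeg_le; rewrite card_mx mul1n card_ord in deg4_le.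
apply: leq_trans (leq_trans _ deg4_le) _; first by rewrite leq_exp2r // card_incidence_sub_le.
rewrite -expnM -expnD mulnCA -expnD -mulnA mulnDr -expnD mulnCA -expnD.
rewrite (_ : 6 = 2 * (1 + 2))%N // -mulnA leq_mul2l mulnDl mul1n leq_add2r.
by rewrite leq_pexp2l.
Qed.
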